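(* Let $m,n\ge 1$, let $a_1,\dots,a_n\in\mathbb{C}$ be distinct, let $m_1,\dots,m_n\ge1$ be integers, and let $c_0,\dots,c_{m-1},b_k^{(j)}\in\mathbb{C}$. Let $$r(\lambda)=\lambda^m-c_{m-1}\lambda^{m-1}-\cdots-c_1\lambda-c_0-\sum_{j=1}^n\sum_{k=1}^{m_j}\frac{b_k^{(j)}}{(\lambda-a_j)^k},$$ and let $\mathcal{C}_r$ be its associated block matrix (defined in the context). Then every zero of $r(\lambda)$ is an eigenvalue of $\mathcal{C}_r$.
   Context: A zero of $r$ is a $\lambda_0\in\mathbb{C}\setminus\{a_1,\dots,a_n\}$ with $r(\lambda_0)=0$. Let $N=m+\sum_{j}\frac{m_j(m_j+1)}2$. The associated block matrix is the $N\times N$ matrix $$\mathcal{C}_r=\begin{bmatrix}\mathcal{A}_n&0&\cdots&0&-\mathcal{F}_n\\ 0&\mathcal{A}_{n-1}&\cdots&0&-\mathcal{F}_{n-1}\\ \vdots&&\ddots&&\vdots\\ 0&0&\cdots&\mathcal{A}_1&-\mathcal{F}_1\\ \mathcal{B}_n&\mathcal{B}_{n-1}&\cdots&\mathcal{B}_1&\mathcal{B}_0\end{bmatrix},$$ where for $1\le j\le n$: $\mathcal{A}_j=\mathrm{diag}(A^{(j)}_{m_j},\dots,A^{(j)}_1)$ with $A^{(j)}_k$ the $k\times k$ upper bidiagonal matrix with $a_j$ on the diagonal and $1$ on the superdiagonal; $\mathcal{F}_j=\begin{bmatrix}F_{m_j}\\ \vdots\\ F_1\end{bmatrix}$ with $F_k$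 the $k\times m$ matrix whose only nonzero entry is $1$ in position $(k,1)$; $\mathcal{B}_j=\begin{bmatrix}B^{(j)}_{m_j}&\cdots&B^{(j)}_1\end{bmatrix}$ with $B^{(j)}_k$ the $m\times k$ matrix whose only nonzero entry is $-b^{(j)}_k$ in position $(m,1)$; and $\mathcal{B}_0$ is the $m\times m$ companion matrix with $1$'s on the superdiagonal, last row $(c_0,c_1,\dots,c_{m-1})$, and zeros elsewhere. *)

From HB Require Import structures.
From mathcomp Require Import all_boot all_order all_algebra.
From mathcomp Require Import reals Rstruct complex.
Set Implicit Arguments. Unset Strict Implicit. Unset Printing Implicit Defensive.
Import Order.TTheory GRing.Theory Num.Theory.
Local Open Scope ring_scope.

Definition Cplx : fieldType := (Rdefinitions.R)[i].

Section BlockMatrix.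
Variables (m n : nat).
(* Indexing convention: the paper's index j in {1..n} is the ordinal j-1 : 'I_n;
   a j = a_{j+1}, mult j = m_{j+1}, b j k = b_k^{(j+1)} (k is 1-based),
   c i = c_i for i : 'I_m. *)
Variables (a : 'I_n -> Cplx) (mult : 'I_n -> nat) (b : 'I_n -> nat -> Cplx)
          (c : 'I_m -> Cplx).

Definition bidiag (x : Cplx) (k : nat) : 'M[Cplx]_k :=
  \matrix_(i < k, l < k) (if l == i then x else if (l == i.+1 :> nat) then 1 else 0).

Definition Fmx (k : nat) : 'M[Cplx]_(k, m) :=
  \matrix_(i < k, l < m) (if ((i == k.-1 :> nat) && (l == 0 :> nat)) then 1 else 0).

Definition Bmx (bk : Cplx) (k : nat) : 'M[Cplx]_(m, k) :=
  \matrix_(i < m, l < k) (if ((i == m.-1 :> nat) && (l == 0 :> nat)) then - bk else 0).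

Definition companion : 'M[Cplx]_m :=
  \matrix_(i < m, l < m)
    (if (i == m.-1 :> nat) then c l else if (l == i.+1 :> nat) then 1 else 0).

(* Block ordering: the outer blocks are listed j = n, n-1, ..., 1, i.e. the
   position p : 'I_n corresponds to the paper's index j = n - p (ordinal rev_ord p);
   inside block j the sub-blocks are listed k = m_j, m_j - 1, ..., 1, i.e. the
   position q : 'I_(m_j) corresponds to k = m_j - q. *)
Definition jj (p : 'I_n) : 'I_n := rev_ord p.
Definition ksz (p : 'I_n) (q : 'I_(mult (jj p))) : nat := (mult (jj p) - q)%N.
Definition jsz (p : 'I_n) : nat := (\sum_(q < mult (jj p)) ksz q)%N.

Definition calA (p : 'I_n) : 'M[Cplx]_(jsz p) :=
  \mxdiag_(q < mult (jj p)) bidiag (a (jj p)) (ksz q).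
Definition calF (p : 'I_n) : 'M[Cplx]_(jsz p, m) :=
  \mxcol_(q < mult (jj p)) Fmx (ksz q).
Definition calB (p : 'I_n) : 'M[Cplx]_(m, jsz p) :=
  \mxrow_(q < mult (jj p)) Bmx (b (jj p) (ksz q)) (ksz q).

Definition Cr : 'M[Cplx]_((\sum_(p < n) jsz p) + m) :=
  block_mx (\mxdiag_(p < n) calA p) (- \mxcol_(p < n) calF p)
           (\mxrow_(p < n) calB p) companion.

Definition r_fun (lam : Cplx) : Cplx :=
  lam ^+ m - \sum_(i < m) c i * lam ^+ i
  - \sum_(j < n) \sum_(k < mult j) b j k.+1 / (lam - a j) ^+ k.+1.

Definition is_zero_of_r (lam : Cplx) : Prop :=
  (forall j : 'I_n, lam != a j) /\ r_fun lam = 0.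
End BlockMatrix.

(** The vector whose blocks are (-1/(λ-a_j)^k, ..., -1/(λ-a_j)) for the
    bidiagonal blocks and (1, λ, ..., λ^(m-1)) for the companion block is an
    eigenvector of C_r for λ whenever λ is not a pole: the bidiagonal rows hold
    because (λ - a_j) d^(i+1) = d^i with d = 1/(λ - a_j), the companion rows
    shift the powers of λ, and the last row reduces to λ^m = Σ c_i λ^i +
    Σ_j Σ_k b_k^(j)/(λ-a_j)^k, which is r(λ) = 0. *)
From HB Require Import structures.
From mathcomp Require Import all_boot all_order all_algebra.
From mathcomp Require Import reals Rstruct complex.
From mathcomp Require Import ring zify.
Import Order.TTheory GRing.Theory Num.Theory.
Local Open Scope ring_scope.
Set Implicit Arguments. Unset Strict Implicit. Unset Printing Implicit Defensive.

Lemma eigenvalue_col (F : fieldType) N (g : 'M[F]_N) lam (v : 'cV_N) :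
  v != 0 -> g *m v = lam *: v -> eigenvalue g lam.
Proof.
move=> v_neq0 gv; rewrite /eigenvalue /eigenspace kermx_eq0 row_free_unit.
apply: contra v_neq0 => g_unit.
have : (g - lam%:M) *m v = 0 by rewrite mulmxBl mul_scalar_mx gv subrr.
by move/(congr1 (mulmx (invmx (g - lam%:M)))); rewrite mulKmx // mulmx0 => ->.
Qed.

Lemma sum_ord_if_eq (V : nmodType) (k t : nat) (g : nat -> V) :
  \sum_(l < k) (if l == t :> nat then g l else 0) = if (t < k)%N then g t else 0.
Proof.
case: ltnP => t_k.
  rewrite (bigD1 (Ordinal t_k)) //= eqxx big1 ?addr0 // => l l_neq.
  by case: eqP => // l_t; case/eqP: l_neq; apply: val_inj.
by apply: big1 => l _; rewrite ltn_eqF // (leq_trans (ltn_ord l) t_k).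
Qed.

Lemma sum_ord_sub_eq_succ (V : nmodType) (M : nat) (g : nat -> V) :
  \sum_(q < M) g (M - q)%N = \sum_(k < M) g k.+1.
Proof.
by rewrite [RHS](reindex_inj rev_ord_inj); apply: eq_bigr => q _; rewrite subnSK.
Qed.

Lemma sum_rev_ord (V : nmodType) n (g : 'I_n -> V) :
  \sum_(p < n) g (rev_ord p) = \sum_(p < n) g p.
Proof. by rewrite [RHS](reindex_inj rev_ord_inj). Qed.

Lemma mxdiag_mxcol_eigen (R : pzRingType) K (p_ : 'I_K -> nat) m
    (A_ : forall i, 'M[R]_(p_ i)) (F_ : forall i, 'M[R]_(p_ i, m))
    (Y_ : forall i, 'cV[R]_(p_ i)) (z : 'cV_m) lam :
  (forall i, A_ i *m Y_ i - F_ i *m z = lam *: Y_ i) ->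
  \mxdiag_i A_ i *m \mxcol_i Y_ i - \mxcol_i F_ i *m z = lam *: \mxcol_i Y_ i.
Proof.
move=> eigen_i; rewrite mul_mxdiag_mxcol mxcol_mul -mxcolB.
rewrite -mul_scalar_mx -(@mxdiagZ _ _ p_) mul_mxdiag_mxcol.
by apply: eq_mxcol => i; rewrite mul_scalar_mx eigen_i.
Qed.

Section EigenvectorBlocks.
Variable m : nat.
Hypothesis m_gt0 : (0 < m)%N.

Definition pole_vec (x lam : Cplx) (k : nat) : 'cV[Cplx]_k :=
  \col_(i < k) - (lam - x)^-1 ^+ (k - i).
Definition power_vec (lam : Cplx) : 'cV[Cplx]_m := \col_(i < m) lam ^+ i.

Lemma power_vec_neq0 lam : power_vec lam != 0.
Proof.
apply/negP => /eqP/matrixP/(_ (Ordinal m_gt0) 0).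
by rewrite !mxE expr0 => /eqP; rewrite oner_eq0.
Qed.

Lemma Fmx_mul_power_vec k lam :
  Fmx m k *m power_vec lam = \col_(i < k) (if i == k.-1 :> nat then 1 else 0).
Proof.
apply/matrixP => i j; rewrite !mxE; under eq_bigr => l _ do rewrite !mxE.
case: eqP => _ /=; last by apply: big1 => l _; rewrite mul0r.
under eq_bigr => l _ do rewrite (fun_if (fun v => v * _)) mul0r mul1r.
by rewrite (sum_ord_if_eq _ _ (fun l => lam ^+ l)) m_gt0 expr0.
Qed.

Lemma Bmx_mul_pole_vec bk k x lam : (0 < k)%N ->
  Bmx m bk k *m pole_vec x lam k =
  \col_(r < m) (if r == m.-1 :> nat then bk / (lam - x) ^+ k else 0).
Proof.
move=> k_gt0; apply/matrixP => r j; rewrite !mxE; under eq_bigr => l _ do rewrite !mxE.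
case: eqP => _ /=; last by apply: big1 => l _; rewrite mul0r.
under eq_bigr => l _ do rewrite (fun_if (fun v => v * _)) mul0r.
rewrite (sum_ord_if_eq _ _ (fun l => - bk * - (lam - x)^-1 ^+ (k - l))) k_gt0.
by rewrite mulrNN subn0 exprVn.
Qed.

Lemma companion_mul_power_vec c lam :
  companion c *m power_vec lam =
  \col_(r < m) (if r == m.-1 :> nat then \sum_(i < m) c i * lam ^+ i
                else lam ^+ r.+1).
Proof.
apply/matrixP => r j; rewrite !mxE; under eq_bigr => l _ do rewrite !mxE.
case: eqP => r_last //=.
under eq_bigr => l _ do rewrite (fun_if (fun v => v * _)) mul0r mul1r.
rewrite (sum_ord_if_eq _ _ (fun l => lam ^+ l)).
by case: ltnP => // r_big; case: r_last; have := ltn_ord r; lia.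
Qed.

Lemma bidiag_pole_vec x lam k : x != lam ->
  bidiag x k *m pole_vec x lam k - Fmx m k *m power_vec lam =
  lam *: pole_vec x lam k.
Proof.
move=> x_neq_lam; set d := (lam - x)^-1.
have d_def : (lam - x) * d = 1 by rewrite mulfV // subr_eq0 eq_sym.
apply/matrixP => i j; rewrite Fmx_mul_power_vec !mxE.
have bidiag_row (l : 'I_k) : bidiag x k i l * pole_vec x lam k l j =
    (if l == i :> nat then x * - d ^+ (k - l) else 0) +
    (if l == i.+1 :> nat then - d ^+ (k - l) else 0).
  rewrite !mxE val_eqE; case: (eqVneq l i) => [->|_].
    by rewrite (_ : (i == i.+1 :> nat) = false) ?addr0 //; lia.
  by rewrite add0r; case: eqP; rewrite ?mul1r ?mul0r.
rewrite (eq_bigr _ (fun l _ => bidiag_row l)) big_split /=.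
rewrite (sum_ord_if_eq _ _ (fun l => x * - d ^+ (k - l))).
rewrite (sum_ord_if_eq _ _ (fun l => - d ^+ (k - l))) ltn_ord.
case: ltnP => i_lt.
  rewrite (_ : (i == k.-1 :> nat) = false); last by lia.
  rewrite (_ : (k - i = (k - i.+1).+1)%N); last by lia.
  by rewrite exprS -{2}[d ^+ _]mul1r -d_def; ring.
rewrite (_ : (i == k.-1 :> nat) = true); last by have := ltn_ord i; lia.
rewrite (_ : (k - i = 1)%N); last by have := ltn_ord i; lia.
by rewrite expr1 -d_def; ring.
Qed.

End EigenvectorBlocks.

Section CrEigenvector.
Variables (m n : nat) (a : 'I_n -> Cplx) (mult : 'I_n -> nat).
Variables (b : 'I_n -> nat -> Cplx) (lam : Cplx).
Hypothesis lam_not_pole : forall j, lam != a j.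

Definition pole_blocks : 'cV[Cplx]_(\sum_(p < n) jsz mult p) :=
  \mxcol_p \mxcol_(q < mult (jj p)) pole_vec (a (jj p)) lam (ksz q).

Lemma Cr_upper_rows : (0 < m)%N ->
  \mxdiag_p calA a mult p *m pole_blocks - \mxcol_p calF m mult p *m power_vec m lam =
  lam *: pole_blocks.
Proof.
move=> m_gt0; do 2!apply: mxdiag_mxcol_eigen => ?.
by apply: bidiag_pole_vec; rewrite // eq_sym.
Qed.

Lemma mxrow_calB_mul_pole_blocks :
  \mxrow_p calB m mult b p *m pole_blocks =
  \col_(r < m) (if r == m.-1 :> nat
                then \sum_(j < n) \sum_(k < mult j) b j k.+1 / (lam - a j) ^+ k.+1
                else 0).
Proof.
rewrite mul_mxrow_mxcol; apply/matrixP => r i; rewrite summxE !mxE.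
under eq_bigr => p _ do rewrite mul_mxrow_mxcol summxE.
under eq_bigr => p _ do under eq_bigr => q _
  do rewrite Bmx_mul_pole_vec ?subn_gt0 // mxE.
case: eqP => _; last by rewrite big1 // => p _; rewrite big1.
rewrite -(sum_rev_ord (fun j => \sum_(k < mult j) b j k.+1 / (lam - a j) ^+ k.+1)).
by apply: eq_bigr => p _; rewrite (sum_ord_sub_eq_succ _ (fun k => b _ k / _ ^+ k)).
Qed.

End CrEigenvector.

Theorem corollary3p2 (m n : nat) (a : 'I_n -> Cplx) (mult : 'I_n -> nat)
    (b : 'I_n -> nat -> Cplx) (c : 'I_m -> Cplx) :
  (1 <= m)%N -> (1 <= n)%N -> injective a -> (forall j, 1 <= mult j)%N ->
  forall lam0 : Cplx, is_zero_of_r a mult b c lam0 ->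
  eigenvalue (Cr a mult b c) lam0.
Proof.
move=> m_gt0 _ _ _ lam [not_pole r_lam].
apply: (@eigenvalue_col _ _ _ _ (col_mx (pole_blocks a mult lam) (power_vec m lam))).
  by rewrite col_mx_eq0 negb_and power_vec_neq0 // orbT.
rewrite /Cr mul_block_col scale_col_mx mulNmx Cr_upper_rows //; congr col_mx.
rewrite mxrow_calB_mul_pole_blocks companion_mul_power_vec //.
apply/matrixP => r i; rewrite !mxE -exprS; case: eqP => [->|_]; last by rewrite add0r.
rewrite prednK //.
by move/eqP: r_lam; rewrite /r_fun subr_eq0 subr_eq => /eqP ->.
Qed.
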